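(* For every integer $n \ge 1$, $\Lambda_{n+1} \ge \Lambda_n$; that is, $\Lambda_n$ is nondecreasing in $n$.
   Context: All graphs are finite, simple and undirected (not necessarily connected). For a graph $G=(V,E)$ and a vertex $v\in V$, let $N_v$ be the set of neighbours of $v$. The local complementation (LC) of $G$ at $v$ is the graph $G^v$ obtained from $G$ by complementing the subgraph induced on $N_v$ (i.e., for each pair of distinct $a,b\in N_v$, the edge $ab$ is added if absent and removed if present; all other adjacencies are unchanged). The LC orbit $[G]$ of $G$ is the set of all graphs obtainable from $G$ by a finite sequence of local complementations (graphs are considered up to isomorphism). Let $\alpha(G)$ denote the independence number of $G$ (size of a maximum independent set), and define $\lambda(G)=\max_{H\in[G]}\alpha(H)$. Let $\Lambda_n$ be the minimum of $\lambda(G)$ over all graphs $G$ on $n$ vertices. *)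

From mathcomp Require Import all_boot.
Set Implicit Arguments. Unset Strict Implicit. Unset Printing Implicit Defensive.

Definition graph (n : nat) : finType := {ffun 'I_n * 'I_n -> bool}.

Definition adj n (G : graph n) (x y : 'I_n) : bool := G (x, y).

Definition simple_graph n (G : graph n) : bool :=
  [forall x, forall y, adj G x y == adj G y x] && [forall x, ~~ adj G x x].

Definition empty_graph n : graph n := [ffun _ => false].

Definition lc n (G : graph n) (v : 'I_n) : graph n :=
  [ffun p : 'I_n * 'I_n =>
     if [&& p.1 != p.2, adj G v p.1 & adj G v p.2] then ~~ G p else G p].

Definition lc_step n : rel (graph n) := fun G H => [exists v, H == lc G v].

Definition lc_orbit n (G : graph n) : pred (graph n) := fun H => connect (@lc_step n) G H.

Definition independent n (G : graph n) (S : {set 'I_n}) : bool :=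
  [forall x in S, forall y in S, ~~ adj G x y].

Definition alpha n (G : graph n) : nat :=
  \max_(S : {set 'I_n} | independent G S) #|S|.

Definition lambda n (G : graph n) : nat :=
  \max_(H in lc_orbit G) alpha H.

Definition Lambda (n : nat) : nat :=
  lambda [arg min_(G < empty_graph n | simple_graph G) lambda G].

(* Restricting a graph on n vertices to a subset of its vertices commutes with
   local complementation at the retained vertices, so every graph in the LC
   orbit of the induced subgraph is induced by a graph in the LC orbit of the
   whole graph; independent sets of an induced subgraph stay independent in
   the whole graph.  Hence lambda can only drop when passing to an induced
   subgraph, and an optimal graph on n vertices induces a graph on m <= n
   vertices witnessing Lambda m <= Lambda n. *)

From mathcomp Require Import all_boot.
Set Implicit Arguments. Unset Strict Implicit. Unset Printing Implicit Defensive.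

Section InducedSubgraph.

Variables (m n : nat) (f : 'I_m -> 'I_n).
Hypothesis f_inj : injective f.

Definition induced (G : graph n) : graph m := [ffun p => G (f p.1, f p.2)].

Lemma adj_induced G x y : adj (induced G) x y = adj G (f x) (f y).
Proof. by rewrite /adj ffunE. Qed.

Lemma simple_induced G : simple_graph G -> simple_graph (induced G).
Proof.
case/andP=> /forallP sym_G /forallP loopless_G; apply/andP; split.
  apply/forallP=> x; apply/forallP=> y; rewrite !adj_induced.
  exact: (forallP (sym_G (f x)) (f y)).
by apply/forallP=> x; rewrite adj_induced.
Qed.

Lemma induced_lc G v : induced (lc G (f v)) = lc (induced G) v.
Proof. by apply/ffunP=> -[x y]; rewrite /induced /lc /adj !ffunE /= (inj_eq f_inj). Qed.

Lemma lc_orbit_induced G H : lc_orbit (induced G) H ->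
  exists2 H', lc_orbit G H' & induced H' = H.
Proof.
case/connectP=> p; elim: p G => [|K p IHp] G /=; first by move=> _ ->; exists G => //; apply: connect0.
case/andP=> /existsP[v /eqP->] path_p last_p.
rewrite -induced_lc in path_p last_p.
have [H' orbit_H' <-] := IHp _ path_p last_p.
exists H' => //; apply: connect_trans orbit_H'.
by apply: connect1; apply/existsP; exists (f v).
Qed.

Lemma alpha_induced G : alpha (induced G) <= alpha G.
Proof.
apply/bigmax_leqP=> S indep_S; rewrite -(card_imset S f_inj).
apply: (leq_bigmax_cond (P := independent G)).
apply/forallP=> fx; apply/implyP=> /imsetP[x xS ->].
apply/forallP=> fy; apply/implyP=> /imsetP[y yS ->].
rewrite -adj_induced.
exact: (implyP (forallP (implyP (forallP indep_S x) xS) y) yS).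
Qed.

Lemma lambda_induced G : lambda (induced G) <= lambda G.
Proof.
apply/bigmax_leqP=> H /lc_orbit_induced[H' orbit_H' <-].
apply: leq_trans (alpha_induced H') _.
exact: (leq_bigmax_cond (P := fun K => K \in lc_orbit G)).
Qed.

End InducedSubgraph.

Lemma simple_empty_graph n : simple_graph (empty_graph n).
Proof.
by apply/andP; split; apply/forallP=> x; rewrite /adj ?ffunE //; apply/forallP=> y; rewrite !ffunE.
Qed.

Lemma Lambda_le_lambda n (G : graph n) : simple_graph G -> Lambda n <= lambda G.
Proof.
by move=> simple_G; rewrite /Lambda; case: arg_minnP; [exact: simple_empty_graph|move=> M _; apply].
Qed.

Lemma Lambda_attained n : exists2 G : graph n, simple_graph G & Lambda n = lambda G.
Proof. by rewrite /Lambda; case: arg_minnP; [exact: simple_empty_graph|move=> M simple_M _; exists M]. Qed.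

Lemma Lambda_monotone m n : m <= n -> Lambda m <= Lambda n.
Proof.
move=> le_mn; have [G simple_G ->] := Lambda_attained n.
have widen_inj : injective (widen_ord le_mn) by move=> x y /(congr1 val) /= /val_inj.
apply: leq_trans (lambda_induced widen_inj G).
exact/Lambda_le_lambda/simple_induced.
Qed.

Theorem mainTheorem1 (n : nat) : 1 <= n -> Lambda n <= Lambda n.+1.
Proof. by move=> _; apply: Lambda_monotone (leqnSn n). Qed.
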